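(* (Differential equation.) Let $n,s\in\mathbb{N}_0$ and $P_n\in M_n$. Then $H=H_{s,\mu,P_n}$ satisfies $D_h^2H-2x\,D_hH-C(s,\mu,n)\,H=0,$ where $C(s,\mu,n)=2s$ if $s$ is even and $C(s,\mu,n)=2(s+\mu+2n-1)$ if $s$ is odd, and $2x\,D_hH$ denotes the Clifford product of $2x$ with $D_hH$.
   Context: Let $d\ge 2$. $\mathbb{R}_{0,d}$ is the real Clifford algebra generated by $e_1,\dots,e_d$ with $e_ie_j+e_je_i=-2\delta_{ij}$; vectors $x$ are identified with $\sum_ix_ie_i$. $R$ is a root system with reflection group $W$, positive subsystem $R_+$, $\kappa:R\to[0,\infty)$ a $W$-invariant multiplicity function with $\gamma_\kappa=\sum_{\alpha\in R_+}\kappa(\alpha)>0$, $\mu=2\gamma_\kappa+d$. Dunkl operators $T_if(x)=\partial_{x_i}f(x)+\sum_{\alpha\in R_+}\kappa(\alpha)\frac{f(x)-f(\sigma_\alpha x)}{\langle\alpha,x\rangle}\alpha_i$; Dunkl–Dirac operator $D_h=\sum_ie_iT_i$. $M_n$: $\mathbb{C}\otimes\mathbb{R}_{0,d}$-valued homogeneous polynomials of degree $n$ with $D_hP=0$. $D_+f=D_hf-2xf$, and $H_{s,\mu,P_n}=(D_+)^sP_n$. *)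

From Stdlib Require Import Reals Lra List Arith.
From Stdlib Require Import Classical ClassicalEpsilon.
Open Scope R_scope.

Definition Cc := (R * R)%type.
Definition c0 : Cc := (0, 0).
Definition cadd (a b : Cc) : Cc := (fst a + fst b, snd a + snd b).
Definition cmul (a b : Cc) : Cc :=
  (fst a * fst b - snd a * snd b, fst a * snd b + snd a * fst b).
Definition cscal (r : R) (a : Cc) : Cc := (r * fst a, r * snd a).

Fixpoint csum (n : nat) (f : nat -> Cc) : Cc :=
  match n with O => c0 | S m => cadd (csum m f) (f m) end.
Fixpoint rsum (n : nat) (f : nat -> R) : R :=
  match n with O => 0 | S m => rsum m f + f m end.
Fixpoint nsum (n : nat) (f : nat -> nat) : nat :=
  match n with O => O | S m => (nsum m f + f m)%nat end.

(* ---------- the complexified Clifford algebra C (x) R_{0,d} ----------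
   An element is the family of its coordinates on the basis e_A, where the
   subset A of {0,..,d-1} is encoded as the bitmask k (bit i set <-> i in A).
   Only coordinates k < 2^d are meaningful. *)
Definition CL := nat -> Cc.
Definition clzero : CL := fun _ => c0.
Definition cladd (u v : CL) : CL := fun k => cadd (u k) (v k).
Definition clscal (r : R) (u : CL) : CL := fun k => cscal r (u k).
Definition clsub (u v : CL) : CL := cladd u (clscal (-1) v).
Definition clsumn (n : nat) (F : nat -> CL) : CL := fun k => csum n (fun i => F i k).

(* sign of e_A e_B = sign * e_(A xor B), with e_i e_j + e_j e_i = -2 delta_ij *)
Definition clsign (d a b : nat) : R :=
  (-1) ^ (nsum d (fun i => nsum d (fun j =>
            if (Nat.testbit a i && Nat.testbit b j && Nat.ltb j i)%bool then 1%nat else 0%nat))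
          + nsum d (fun i => if (Nat.testbit a i && Nat.testbit b i)%bool then 1%nat else 0%nat))%nat.

Definition clmul (d : nat) (u v : CL) : CL := fun k =>
  csum (2 ^ d) (fun a => csum (2 ^ d) (fun b =>
    if Nat.eqb (Nat.lxor a b) k then cscal (clsign d a b) (cmul (u a) (v b)) else c0)).

Definition egen (i : nat) : CL := fun k => if Nat.eqb k (2 ^ i) then (1, 0) else c0.
Definition vecCL (d : nat) (x : nat -> R) : CL :=
  fun k => csum d (fun i => if Nat.eqb k (2 ^ i) then (x i, 0) else c0).

(* ---------- Euclidean geometry on R^d (points: nat -> R, coords < d used) ---------- *)
Definition ip (d : nat) (a b : nat -> R) : R := rsum d (fun i => a i * b i).
Definition vscal (c : R) (a : nat -> R) : nat -> R := fun j => c * a j.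
Definition refl (d : nat) (alpha x : nat -> R) : nat -> R :=
  fun j => x j - 2 * ip d alpha x / ip d alpha alpha * alpha j.
Definition unitv (i : nat) : nat -> R := fun j => if Nat.eqb j i then 1 else 0.

Definition supported (d : nat) (a : nat -> R) : Prop := forall j, (d <= j)%nat -> a j = 0.

Definition is_root_system (d : nat) (Rl : list (nat -> R)) : Prop :=
  NoDup Rl /\
  (forall a, In a Rl -> supported d a /\ exists i, (i < d)%nat /\ a i <> 0) /\
  (forall a b, In a Rl -> In b Rl -> In (refl d a b) Rl) /\
  (forall a c, In a Rl -> In (vscal c a) Rl -> c = 1 \/ c = -1).

Definition is_positive_subsystem (d : nat) (Rl Rp : list (nat -> R)) : Prop :=
  NoDup Rp /\
  exists beta, (forall a, In a Rl -> ip d a beta <> 0) /\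
    (forall a, In a Rp <-> (In a Rl /\ ip d a beta > 0)).

(* the reflection group W is generated by the sigma_alpha; a W-invariant
   multiplicity function kappa : R -> [0,oo) *)
Definition is_multiplicity (d : nat) (Rl : list (nat -> R)) (kappa : (nat -> R) -> R) : Prop :=
  (forall a, In a Rl -> 0 <= kappa a) /\
  (forall (ws : list (nat -> R)) a, (forall w, In w ws -> In w Rl) -> In a Rl ->
      kappa (fold_right (refl d) a ws) = kappa a).

Definition gamma (Rp : list (nat -> R)) (kappa : (nat -> R) -> R) : R :=
  fold_right (fun a acc => kappa a + acc) 0 Rp.
Definition mu (d : nat) (Rp : list (nat -> R)) (kappa : (nat -> R) -> R) : R :=
  2 * gamma Rp kappa + INR d.

Definition Fn := (nat -> R) -> CL.
(* derivative at 0 of a real function (the value when it exists) *)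
Definition deriv0 (g : R -> R) : R :=
  epsilon (inhabits 0) (fun l => derivable_pt_lim g 0 l).
Definition deriv0C (g : R -> CL) : CL :=
  fun k => (deriv0 (fun t => fst (g t k)), deriv0 (fun t => snd (g t k))).
Definition dirderiv (v : nat -> R) (f : Fn) (x : nat -> R) : CL :=
  deriv0C (fun t => f (fun j => x j + t * v j)).

(* the divided difference (f(x) - f(sigma_alpha x)) / <alpha,x>, extended by
   continuity (for C^1 f) to the hyperplane <alpha,x> = 0 by 2 d_alpha f / |alpha|^2 *)
Definition divdiff (d : nat) (alpha : nat -> R) (f : Fn) (x : nat -> R) : CL :=
  if Req_EM_T (ip d alpha x) 0
  then clscal (2 / ip d alpha alpha) (dirderiv alpha f x)
  else clscal (/ ip d alpha x) (clsub (f x) (f (refl d alpha x))).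

Definition dunklT (d : nat) (Rp : list (nat -> R)) (kappa : (nat -> R) -> R)
  (i : nat) (f : Fn) : Fn := fun x =>
  cladd (dirderiv (unitv i) f x)
    (fold_right (fun a acc => cladd (clscal (kappa a * a i) (divdiff d a f x)) acc) clzero Rp).

Definition Dh (d : nat) Rp kappa (f : Fn) : Fn := fun x =>
  clsumn d (fun i => clmul d (egen i) (dunklT d Rp kappa i f x)).

Definition Dplus (d : nat) Rp kappa (f : Fn) : Fn := fun x =>
  clsub (Dh d Rp kappa f x) (clscal 2 (clmul d (vecCL d x) (f x))).

Definition Hfun (d : nat) Rp kappa (s : nat) (P : Fn) : Fn :=
  Nat.iter s (Dplus d Rp kappa) P.

Definition is_hom_poly (d n : nat) (P : Fn) : Prop :=
  exists L : list ((nat -> nat) * CL),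
    (forall mc, In mc L ->
       nsum d (fst mc) = n /\ (forall k, (2 ^ d <= k)%nat -> snd mc k = c0)) /\
    (forall x, P x = fold_right
        (fun mc acc => cladd (clscal (fold_right Rmult 1 (map (fun i => x i ^ fst mc i) (seq 0 d))) (snd mc)) acc)
        clzero L).

Definition in_Mn (d : nat) Rp kappa (n : nat) (P : Fn) : Prop :=
  is_hom_poly d n P /\ (forall x, Dh d Rp kappa P x = clzero).

Definition Cconst (s : nat) (m : R) (n : nat) : R :=
  if Nat.even s then 2 * INR s else 2 * (INR s + m + 2 * INR n - 1).

From Stdlib Require Import Reals Lra Lia List Arith Bool.
From Stdlib Require Import ClassicalEpsilon FunctionalExtensionality.
Open Scope R_scope.

(* Since [D_+ g = D_h g - 2 x g], the left-hand side is [D_+ (D_h H_s) - C H_s].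
   For [f] homogeneous of degree [N] the Dunkl operators satisfy
   [D_h (x f) + x D_h f = -(2N + mu) f].  Applied to the monogenic [P], this shows that
   [D_h (x^(m+1) P)] is a scalar multiple of [x^m P], and that [x D_h - D_h x] acts on
   [x^m P] as the scalar [lambda = mu + 2n] for even [m] and [2 - lambda] for odd [m].
   [H_s] is a combination of the [x^m P] with [m = s (mod 2)], hence
   [D_h D_+ H_s = D_+ D_h H_s + 2 c_s H_s] with [c_s] that scalar, and by induction on [s]
   [D_+ D_h H_(s+1) = D_+ (D_h D_+ H_s) = (C_s + 2 c_s) H_(s+1) = C_(s+1) H_(s+1)]. *)

Lemma Cc_eq (a b : Cc) : fst a = fst b -> snd a = snd b -> a = b.
Proof. destruct a, b; simpl; intros; subst; reflexivity. Qed.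

Ltac cc_ring := apply Cc_eq; simpl; ring.

Ltac clring := let k := fresh "k" in
  apply functional_extensionality; intro k;
  unfold cladd, clscal, clsub, clzero, cadd, cscal, c0; cc_ring.

Lemma csum_ext n F G : (forall i, (i < n)%nat -> F i = G i) -> csum n F = csum n G.
Proof. induction n; simpl; intros; auto. rewrite IHn, H by auto. reflexivity. Qed.

Lemma csum_zero n F : (forall i, (i < n)%nat -> F i = c0) -> csum n F = c0.
Proof.
  induction n; simpl; intros; auto.
  rewrite IHn, H by auto. unfold cadd, c0; cc_ring.
Qed.

Lemma csum_single n m F :
  (m < n)%nat -> (forall i, (i < n)%nat -> i <> m -> F i = c0) -> csum n F = F m.
Proof.
  induction n; simpl; intros Hm HF; [lia|].
  destruct (Nat.eq_dec m n) as [->|Hne].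
  - rewrite csum_zero by (intros; apply HF; lia). unfold cadd, c0; cc_ring.
  - rewrite IHn, (HF n) by (auto; lia). unfold cadd, c0; cc_ring.
Qed.

Lemma csum_add n F G : csum n (fun i => cadd (F i) (G i)) = cadd (csum n F) (csum n G).
Proof. induction n; simpl; [|rewrite IHn]; unfold cadd, c0; cc_ring. Qed.

Lemma csum_scal n r F : csum n (fun i => cscal r (F i)) = cscal r (csum n F).
Proof. induction n; simpl; [|rewrite IHn]; unfold cadd, cscal, c0; cc_ring. Qed.

Lemma clsumn_S n F : clsumn (S n) F = cladd (clsumn n F) (F n).
Proof. reflexivity. Qed.

Lemma clsumn_ext n F G : (forall i, (i < n)%nat -> F i = G i) -> clsumn n F = clsumn n G.
Proof.
  intros; apply functional_extensionality; intro k; unfold clsumn.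
  apply csum_ext; intros; rewrite H; auto.
Qed.

Lemma clsumn_add n F G :
  clsumn n (fun i => cladd (F i) (G i)) = cladd (clsumn n F) (clsumn n G).
Proof. apply functional_extensionality; intro k; apply csum_add. Qed.

Lemma clsumn_scal n r F : clsumn n (fun i => clscal r (F i)) = clscal r (clsumn n F).
Proof. apply functional_extensionality; intro k; apply csum_scal. Qed.

Lemma clsumn_zero n : clsumn n (fun _ => clzero) = clzero.
Proof. induction n; [reflexivity|]. rewrite clsumn_S, IHn. clring. Qed.

Lemma clsumn_const n u : clsumn n (fun _ => u) = clscal (INR n) u.
Proof. induction n; [simpl; clring|]. rewrite clsumn_S, IHn, S_INR. clring. Qed.

Lemma clsumn_scal_sum n g u : clsumn n (fun i => clscal (g i) u) = clscal (rsum n g) u.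
Proof. induction n; simpl; [clring|]. rewrite clsumn_S, IHn. clring. Qed.

Lemma clsumn_swap n m F :
  clsumn n (fun i => clsumn m (fun j => F i j)) = clsumn m (fun j => clsumn n (fun i => F i j)).
Proof.
  induction n; [symmetry; apply clsumn_zero|].
  rewrite clsumn_S, IHn, <- clsumn_add. reflexivity.
Qed.

Lemma clsumn_delta n i F :
  (i < n)%nat -> clsumn n (fun j => clscal (unitv i j) (F j)) = F i.
Proof.
  induction n; intros Hi; [lia|]. rewrite clsumn_S. unfold unitv at 2.
  destruct (Nat.eqb_spec n i) as [->|Hne].
  - rewrite (clsumn_ext _ _ (fun _ => clzero)), clsumn_zero; [clring|].
    intros j Hj. unfold unitv. destruct (Nat.eqb_spec j i); [lia|clring].
  - rewrite IHn by lia. clring.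
Qed.

Definition clsuml {A} (l : list A) (F : A -> CL) : CL :=
  fold_right (fun a acc => cladd (F a) acc) clzero l.

Lemma clsuml_add {A} (l : list A) F G :
  clsuml l (fun a => cladd (F a) (G a)) = cladd (clsuml l F) (clsuml l G).
Proof. induction l; unfold clsuml in *; simpl; [|rewrite IHl]; clring. Qed.

Lemma clsuml_scal {A} (l : list A) r F :
  clsuml l (fun a => clscal r (F a)) = clscal r (clsuml l F).
Proof. induction l; unfold clsuml in *; simpl; [|rewrite IHl]; clring. Qed.

Lemma clsuml_ext {A} (l : list A) F G : (forall a, In a l -> F a = G a) -> clsuml l F = clsuml l G.
Proof. induction l; unfold clsuml in *; simpl; intros; auto. rewrite IHl, H; auto. Qed.

Lemma clsumn_clsuml {A} n (l : list A) F :
  clsumn n (fun i => clsuml l (F i)) = clsuml l (fun a => clsumn n (fun i => F i a)).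
Proof.
  induction l; unfold clsuml in *; simpl; [apply clsumn_zero|].
  rewrite clsumn_add, IHl. reflexivity.
Qed.

Lemma clsuml_scal_sum {A} (l : list A) (g : A -> R) u :
  clsuml l (fun a => clscal (g a) u) = clscal (fold_right (fun a acc => g a + acc) 0 l) u.
Proof. induction l; unfold clsuml in *; simpl; [|rewrite IHl]; clring. Qed.

(** * Multiplication by generators and vectors *)

Lemma lxor_cancel a b : Nat.lxor (Nat.lxor a b) b = a.
Proof. rewrite Nat.lxor_assoc, Nat.lxor_nilpotent, Nat.lxor_0_r. reflexivity. Qed.

Lemma lxor_swap k a b : Nat.lxor (Nat.lxor k a) b = Nat.lxor (Nat.lxor k b) a.
Proof. rewrite !Nat.lxor_assoc, (Nat.lxor_comm a b). reflexivity. Qed.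

Lemma lxor_lt_pow2 d a b : (a < 2^d)%nat -> (b < 2^d)%nat -> (Nat.lxor a b < 2^d)%nat.
Proof.
  intros Ha Hb.
  destruct (Nat.eq_dec a 0) as [->|Ha0]; [now rewrite Nat.lxor_0_l|].
  destruct (Nat.eq_dec b 0) as [->|Hb0]; [now rewrite Nat.lxor_0_r|].
  destruct (Nat.eq_dec (Nat.lxor a b) 0) as [->|E]; [apply Nat.neq_0_lt_0, Nat.pow_nonzero; lia|].
  apply Nat.log2_lt_pow2; [lia|].
  pose proof (Nat.log2_lxor a b).
  pose proof (Nat.log2_lt_pow2 a d ltac:(lia)). pose proof (Nat.log2_lt_pow2 b d ltac:(lia)).
  lia.
Qed.

Lemma pow2_lt d i : (i < d)%nat -> (2^i < 2^d)%nat.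
Proof. intros. apply Nat.pow_lt_mono_r; lia. Qed.

Lemma testbit_lxor_pow2 b l j : Nat.testbit (Nat.lxor b (2^l)) j = xorb (Nat.testbit b j) (l =? j)%nat.
Proof. rewrite Nat.lxor_spec, Nat.pow2_bits_eqb. reflexivity. Qed.

Lemma nsum_ext n F G : (forall i, (i < n)%nat -> F i = G i) -> nsum n F = nsum n G.
Proof. induction n; simpl; intros; auto. rewrite IHn, H by auto. reflexivity. Qed.

Lemma nsum_single n m F :
  (m < n)%nat -> (forall i, (i < n)%nat -> i <> m -> F i = 0%nat) -> nsum n F = F m.
Proof.
  induction n; simpl; intros Hm HF; [lia|].
  destruct (Nat.eq_dec m n) as [->|Hne].
  - enough (nsum n F = 0%nat) by lia.
    clear IHn Hm. induction n; simpl; auto. rewrite IHn, HF; intros; try apply HF; lia.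
  - rewrite IHn, (HF n) by (auto; lia). lia.
Qed.

Lemma nsum_change_one n l F G :
  (l < n)%nat -> (forall i, (i < n)%nat -> i <> l -> F i = G i) ->
  (nsum n F + G l = nsum n G + F l)%nat.
Proof.
  induction n; simpl; intros Hl HFG; [lia|].
  destruct (Nat.eq_dec l n) as [->|Hne].
  - rewrite (nsum_ext n F G) by (intros; apply HFG; lia). lia.
  - pose proof (IHn ltac:(lia) ltac:(intros; apply HFG; lia)). rewrite (HFG n) by lia. lia.
Qed.

(* The sign of [e_i e_B] splits into the number of bits of [B] below [i]
   (anticommuting [e_i] into place) and the bit [i] of [B] (from [e_i^2 = -1]). *)
Definition bits_below (d i b : nat) : nat :=
  nsum d (fun j => if (Nat.testbit b j && (j <? i))%bool then 1%nat else 0%nat).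
Definition bitn (b i : nat) : nat := if Nat.testbit b i then 1%nat else 0%nat.

Lemma clsign_pow2 d i b :
  (i < d)%nat -> clsign d (2^i) b = (-1)^(bits_below d i b) * (-1)^(bitn b i).
Proof.
  intros Hi. unfold clsign. rewrite <- pow_add. f_equal. f_equal.
  - rewrite (nsum_single d i); auto.
    + rewrite Nat.pow2_bits_eqb, Nat.eqb_refl. reflexivity.
    + intros i0 Hi0 Hne. rewrite (nsum_ext _ _ (fun _ => 0%nat)); [clear; induction d; simpl; lia|].
      intros. rewrite Nat.pow2_bits_eqb. destruct (Nat.eqb_spec i i0); [lia|reflexivity].
  - rewrite (nsum_single d i); auto.
    + rewrite Nat.pow2_bits_eqb, Nat.eqb_refl. reflexivity.
    + intros. rewrite Nat.pow2_bits_eqb. destruct (Nat.eqb_spec i i0); [lia|reflexivity].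
Qed.

Lemma bits_below_flip_above d i l b :
  (i <= l)%nat -> bits_below d i (Nat.lxor b (2^l)) = bits_below d i b.
Proof.
  intros. unfold bits_below. apply nsum_ext. intros j Hj. rewrite testbit_lxor_pow2.
  destruct (Nat.ltb_spec j i).
  - destruct (Nat.eqb_spec l j); [lia|]. rewrite xorb_false_r; reflexivity.
  - rewrite !andb_false_r. reflexivity.
Qed.

Lemma bits_below_flip_below d i l b : (l < i)%nat -> (l < d)%nat ->
  (-1)^(bits_below d i (Nat.lxor b (2^l))) = - (-1)^(bits_below d i b).
Proof.
  intros Hli Hld. unfold bits_below.
  pose proof (nsum_change_one d l
    (fun j => if (Nat.testbit (Nat.lxor b (2^l)) j && (j <? i))%bool then 1%nat else 0%nat)
    (fun j => if (Nat.testbit b j && (j <? i))%bool then 1%nat else 0%nat) Hld) as E.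
  cbv beta in E. rewrite testbit_lxor_pow2, Nat.eqb_refl, (proj2 (Nat.ltb_lt l i) Hli) in E.
  specialize (E ltac:(intros j _ Hj; rewrite testbit_lxor_pow2;
                      destruct (Nat.eqb_spec l j); [lia|now rewrite xorb_false_r])).
  destruct (Nat.testbit b l); simpl in E;
    apply (f_equal (fun m => (-1)^m)) in E; rewrite !pow_add in E; simpl in E; lra.
Qed.

Lemma bitn_flip_other b l i : l <> i -> bitn (Nat.lxor b (2^l)) i = bitn b i.
Proof.
  intros. unfold bitn. rewrite testbit_lxor_pow2.
  destruct (Nat.eqb_spec l i); [lia|]. rewrite xorb_false_r; reflexivity.
Qed.

Lemma bitn_flip b i : (-1)^(bitn (Nat.lxor b (2^i)) i) = - (-1)^(bitn b i).
Proof. unfold bitn. rewrite testbit_lxor_pow2, Nat.eqb_refl. destruct (Nat.testbit b i); simpl; ring. Qed.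

Lemma m1_pow_sq n : (-1)^n * (-1)^n = 1.
Proof. rewrite <- pow_add. replace (n + n)%nat with (2 * n)%nat by lia. apply pow_1_even. Qed.

Lemma sign_sq_cancel a b x : a * a = 1 -> b * b = 1 -> a * - b * (a * b * x) = -1 * x.
Proof.
  intros Ha Hb. transitivity (- ((a * a) * (b * b)) * x); [ring|]. rewrite Ha, Hb. ring.
Qed.

(* The coordinates [k >= 2^d] of a [CL] are junk; here they vanish. *)
Definition clifford (d : nat) (u : CL) : Prop := forall k, (2^d <= k)%nat -> u k = c0.

Definition emul (d i : nat) (u : CL) : CL := fun k =>
  if (k <? 2^d)%nat
  then cscal (clsign d (2^i) (Nat.lxor k (2^i))) (u (Nat.lxor k (2^i))) else c0.

Lemma clmul_egen d i u : (i < d)%nat -> clmul d (egen i) u = emul d i u.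
Proof.
  intros Hi. apply functional_extensionality; intro k. unfold clmul.
  pose proof (pow2_lt d i Hi) as Hp.
  rewrite (csum_single (2^d) (2^i)); auto.
  2:{ intros a Ha Hne. apply csum_zero. intros b Hb. unfold egen.
      destruct (Nat.eqb_spec a (2^i)); [lia|].
      destruct (_ =? k)%nat; unfold cscal, cmul, c0; cc_ring. }
  unfold egen at 1. rewrite Nat.eqb_refl. unfold emul.
  destruct (Nat.ltb_spec k (2^d)).
  - rewrite (csum_single (2^d) (Nat.lxor k (2^i))).
    + rewrite (Nat.lxor_comm (2^i)%nat), lxor_cancel, Nat.eqb_refl.
      unfold cscal, cmul; cc_ring.
    + apply lxor_lt_pow2; auto.
    + intros b Hb Hne. destruct (Nat.eqb_spec (Nat.lxor (2^i) b) k) as [<-|]; auto.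
      rewrite (Nat.lxor_comm (2^i)%nat b), lxor_cancel in Hne. easy.
  - apply csum_zero. intros b Hb. destruct (Nat.eqb_spec (Nat.lxor (2^i) b) k); auto.
    pose proof (lxor_lt_pow2 d (2^i) b Hp Hb). lia.
Qed.

Lemma emul_clifford d i u : clifford d (emul d i u).
Proof. intros k Hk. unfold emul. destruct (Nat.ltb_spec k (2^d)); [lia|reflexivity]. Qed.

Lemma emul_sq d i u : (i < d)%nat -> clifford d u -> emul d i (emul d i u) = clscal (-1) u.
Proof.
  intros Hi Hu. apply functional_extensionality; intro k. unfold emul, clscal.
  destruct (Nat.ltb_spec k (2^d)).
  - assert (Nat.lxor k (2^i) < 2^d)%nat by (apply lxor_lt_pow2; auto; apply pow2_lt; auto).
    destruct (Nat.ltb_spec (Nat.lxor k (2^i)) (2^d)); [|lia].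
    rewrite lxor_cancel, !clsign_pow2, bits_below_flip_above, bitn_flip by auto.
    unfold cscal; apply Cc_eq; simpl; apply sign_sq_cancel; apply m1_pow_sq.
  - rewrite Hu by lia. unfold cscal, c0; cc_ring.
Qed.

Lemma emul_anticomm_lt d i j u : (i < j)%nat -> (j < d)%nat ->
  emul d i (emul d j u) = clscal (-1) (emul d j (emul d i u)).
Proof.
  intros Hij Hj. apply functional_extensionality; intro k. unfold emul, clscal.
  destruct (Nat.ltb_spec k (2^d)); [|unfold cscal, c0; cc_ring].
  assert (Nat.lxor k (2^i) < 2^d)%nat by (apply lxor_lt_pow2; auto; apply pow2_lt; lia).
  assert (Nat.lxor k (2^j) < 2^d)%nat by (apply lxor_lt_pow2; auto; apply pow2_lt; lia).
  destruct (Nat.ltb_spec (Nat.lxor k (2^i)) (2^d)); [|lia].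
  destruct (Nat.ltb_spec (Nat.lxor k (2^j)) (2^d)); [|lia].
  rewrite (lxor_swap k (2^j) (2^i)), !clsign_pow2 by lia.
  rewrite (bits_below_flip_above d i j), (bits_below_flip_above d j j),
    (bits_below_flip_above d i i k), (bits_below_flip_above d j j k),
    (bits_below_flip_below d j i k), (bitn_flip_other _ j i), !bitn_flip, (bitn_flip_other k i j)
    by lia.
  unfold cscal; cc_ring.
Qed.

Lemma emul_emul d i j w : (i < d)%nat -> (j < d)%nat -> clifford d w ->
  emul d i (emul d j w) = cladd (clscal (-1) (emul d j (emul d i w))) (clscal (-2 * unitv i j) w).
Proof.
  intros Hi Hj Hw. unfold unitv. destruct (Nat.eqb_spec j i) as [->|Hne].
  - rewrite emul_sq by auto. clring.
  - destruct (Nat.lt_total i j) as [Hlt|[->|Hlt]]; [|lia|].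
    + rewrite emul_anticomm_lt by auto. clring.
    + rewrite (emul_anticomm_lt d j i) by auto. clring.
Qed.

Lemma emul_add d i u v : emul d i (cladd u v) = cladd (emul d i u) (emul d i v).
Proof.
  apply functional_extensionality; intro k. unfold emul, cladd.
  destruct (_ <? _)%nat; unfold cscal, cadd, c0; cc_ring.
Qed.

Lemma emul_scal d i r u : emul d i (clscal r u) = clscal r (emul d i u).
Proof.
  apply functional_extensionality; intro k. unfold emul, clscal.
  destruct (_ <? _)%nat; unfold cscal, c0; cc_ring.
Qed.

Lemma emul_zero d i : emul d i clzero = clzero.
Proof.
  apply functional_extensionality; intro k. unfold emul, clzero.
  destruct (_ <? _)%nat; unfold cscal, c0; cc_ring.
Qed.

Lemma emul_clsumn d i n F : emul d i (clsumn n F) = clsumn n (fun j => emul d i (F j)).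
Proof. induction n; [apply emul_zero|]. rewrite !clsumn_S, emul_add, IHn. reflexivity. Qed.

Lemma emul_clsuml {A} d i (l : list A) F : emul d i (clsuml l F) = clsuml l (fun a => emul d i (F a)).
Proof. induction l; unfold clsuml in *; simpl; [apply emul_zero|]. rewrite emul_add, IHl. reflexivity. Qed.

Definition vmul (d : nat) (y : nat -> R) (u : CL) : CL := clsumn d (fun j => clscal (y j) (emul d j u)).

Lemma vmul_add d y u v : vmul d y (cladd u v) = cladd (vmul d y u) (vmul d y v).
Proof. unfold vmul. rewrite <- clsumn_add. apply clsumn_ext; intros. rewrite emul_add. clring. Qed.

Lemma vmul_scal d y r u : vmul d y (clscal r u) = clscal r (vmul d y u).
Proof. unfold vmul. rewrite <- clsumn_scal. apply clsumn_ext; intros. rewrite emul_scal. clring. Qed.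

Lemma vmul_zero d y : vmul d y clzero = clzero.
Proof.
  unfold vmul. rewrite (clsumn_ext _ _ (fun _ => clzero)); [apply clsumn_zero|].
  intros. rewrite emul_zero. clring.
Qed.

Lemma vmul_clsuml {A} d y (l : list A) F : vmul d y (clsuml l F) = clsuml l (fun a => vmul d y (F a)).
Proof. induction l; unfold clsuml in *; simpl; [apply vmul_zero|]. rewrite vmul_add, IHl. reflexivity. Qed.

Lemma vmul_lin d a b y z u :
  vmul d (fun j => a * y j + b * z j) u = cladd (clscal a (vmul d y u)) (clscal b (vmul d z u)).
Proof. unfold vmul. rewrite <- !clsumn_scal, <- clsumn_add. apply clsumn_ext; intros. clring. Qed.

Lemma vmul_scal_vec d c z u : vmul d (fun j => c * z j) u = clscal c (vmul d z u).
Proof. unfold vmul. rewrite <- clsumn_scal. apply clsumn_ext; intros. clring. Qed.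

Lemma vmul_unitv d i u : (i < d)%nat -> vmul d (unitv i) u = emul d i u.
Proof. intros. apply clsumn_delta. auto. Qed.

Lemma clmul_add_l d a b u : clmul d (cladd a b) u = cladd (clmul d a u) (clmul d b u).
Proof.
  apply functional_extensionality; intro k. unfold clmul, cladd.
  rewrite <- csum_add. apply csum_ext; intros.
  rewrite <- csum_add. apply csum_ext; intros.
  destruct (_ =? _)%nat; unfold cscal, cmul, cadd, c0; cc_ring.
Qed.

Lemma clmul_scal_l d r a u : clmul d (clscal r a) u = clscal r (clmul d a u).
Proof.
  apply functional_extensionality; intro k. unfold clmul, clscal.
  rewrite <- csum_scal. apply csum_ext; intros.
  rewrite <- csum_scal. apply csum_ext; intros.
  destruct (_ =? _)%nat; unfold cscal, cmul, c0; cc_ring.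
Qed.

Lemma clmul_zero_l d u : clmul d clzero u = clzero.
Proof.
  apply functional_extensionality; intro k. unfold clmul, clzero.
  apply csum_zero; intros. apply csum_zero; intros.
  destruct (_ =? _)%nat; unfold cscal, cmul, c0; cc_ring.
Qed.

Lemma clmul_clsumn_l d n F u : clmul d (clsumn n F) u = clsumn n (fun j => clmul d (F j) u).
Proof. induction n; [apply clmul_zero_l|]. rewrite !clsumn_S, clmul_add_l, IHn. reflexivity. Qed.

Lemma clmul_vecCL d y u : clmul d (vecCL d y) u = vmul d y u.
Proof.
  assert (Hv : vecCL d y = clsumn d (fun j => clscal (y j) (egen j))).
  { apply functional_extensionality; intro k. unfold vecCL, clsumn. apply csum_ext. intros.
    unfold clscal, egen. destruct (_ =? _)%nat; unfold cscal, c0; cc_ring. }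
  rewrite Hv, clmul_clsumn_l. apply clsumn_ext; intros.
  rewrite clmul_scal_l, clmul_egen; auto.
Qed.

(* Anticommutation [e_i x + x e_i = -2 x_i], summed against a family [w_i]. *)
Lemma sum_emul_vmul d y (w : nat -> CL) : (forall i, clifford d (w i)) ->
  clsumn d (fun i => emul d i (vmul d y (w i))) =
  cladd (clscal (-1) (vmul d y (clsumn d (fun i => emul d i (w i)))))
        (clscal (-2) (clsumn d (fun i => clscal (y i) (w i)))).
Proof.
  intros Hw.
  transitivity (clsumn d (fun i =>
    cladd (clscal (-1) (clsumn d (fun j => clscal (y j) (emul d j (emul d i (w i))))))
          (clscal (-2) (clsumn d (fun j => clscal (unitv i j) (clscal (y j) (w i))))))).
  { apply clsumn_ext; intros i Hi. unfold vmul. rewrite emul_clsumn, <- !clsumn_scal, <- clsumn_add.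
    apply clsumn_ext; intros j Hj. rewrite emul_scal, emul_emul by auto. clring. }
  rewrite clsumn_add, !clsumn_scal. f_equal; f_equal.
  - unfold vmul. rewrite clsumn_swap. apply clsumn_ext; intros j Hj.
    rewrite emul_clsumn, clsumn_scal. reflexivity.
  - apply clsumn_ext; intros i Hi. apply (clsumn_delta d i (fun j => clscal (y j) (w i))); auto.
Qed.

Lemma vmul_sq d a u : clifford d u -> vmul d a (vmul d a u) = clscal (- ip d a a) u.
Proof.
  intros Hu.
  assert (Hw : forall i, clifford d (clscal (a i) u)).
  { intros i k Hk. unfold clscal. rewrite Hu by auto. unfold cscal, c0; cc_ring. }
  pose proof (sum_emul_vmul d a (fun i => clscal (a i) u) Hw) as E. cbv beta in E.
  assert (E1 : clsumn d (fun i => emul d i (vmul d a (clscal (a i) u))) = vmul d a (vmul d a u)).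
  { unfold vmul at 2. apply clsumn_ext; intros. rewrite vmul_scal, emul_scal. reflexivity. }
  assert (E2 : clsumn d (fun i => emul d i (clscal (a i) u)) = vmul d a u).
  { apply clsumn_ext; intros. rewrite emul_scal. reflexivity. }
  assert (E3 : clsumn d (fun i => clscal (a i) (clscal (a i) u)) = clscal (ip d a a) u).
  { unfold ip. rewrite <- clsumn_scal_sum. apply clsumn_ext; intros. clring. }
  rewrite E1, E2, E3 in E. apply functional_extensionality; intro k.
  apply (f_equal (fun f => f k)) in E. unfold cladd, clscal, cadd, cscal in *.
  apply (f_equal (fun c => (fst c, snd c))) in E. simpl in E. injection E; intros.
  apply Cc_eq; simpl; lra.
Qed.

(** * Directional derivatives *)

Definition line (y v : nat -> R) (t : R) : nat -> R := fun j => y j + t * v j.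

Lemma line0 y v : line y v 0 = y.
Proof. apply functional_extensionality; intro j; unfold line; ring. Qed.

Lemma dpl_ext f g l : (forall t, f t = g t) -> derivable_pt_lim g 0 l -> derivable_pt_lim f 0 l.
Proof. intros E. replace f with g; auto. apply functional_extensionality; auto. Qed.

Lemma dpl_plus f g a b l : derivable_pt_lim f 0 a -> derivable_pt_lim g 0 b -> l = a + b ->
  derivable_pt_lim (fun t => f t + g t) 0 l.
Proof. intros ? ? ->. apply (derivable_pt_lim_plus f g); auto. Qed.

Lemma dpl_mult f g a b l : derivable_pt_lim f 0 a -> derivable_pt_lim g 0 b ->
  l = a * g 0 + f 0 * b -> derivable_pt_lim (fun t => f t * g t) 0 l.
Proof. intros ? ? ->. apply (derivable_pt_lim_mult f g); auto. Qed.

Lemma dpl_const c : derivable_pt_lim (fun _ => c) 0 0.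
Proof. apply derivable_pt_lim_const. Qed.

Lemma dpl_scal r f a l : derivable_pt_lim f 0 a -> l = r * a ->
  derivable_pt_lim (fun t => r * f t) 0 l.
Proof. intros ? ->. apply (dpl_mult (fun _ => r) f 0 a); auto using dpl_const. ring. Qed.

Lemma dpl_affine y v : derivable_pt_lim (fun t => y + t * v) 0 v.
Proof.
  apply (dpl_plus (fun _ => y) (fun t => t * v) 0 v); [apply dpl_const| |ring].
  apply (dpl_mult (fun t => t) (fun _ => v) 1 0); [apply derivable_pt_lim_id|apply dpl_const|ring].
Qed.

Lemma dpl_pow_1plus N : derivable_pt_lim (fun t => (1 + t) ^ N) 0 (INR N).
Proof.
  replace (INR N) with (INR N * (1 + 0) ^ Nat.pred N * 1) by (rewrite Rplus_0_r, pow1; ring).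
  apply (derivable_pt_lim_comp (fun t => 1 + t) (fun x => x ^ N)).
  - apply (dpl_ext _ (fun t => 1 + t * 1)); [intros; ring|apply dpl_affine].
  - apply derivable_pt_lim_pow.
Qed.

Lemma deriv0_eq g l : derivable_pt_lim g 0 l -> deriv0 g = l.
Proof.
  intros. unfold deriv0. apply (uniqueness_limite g 0); auto.
  apply (epsilon_spec (inhabits 0) (fun l => derivable_pt_lim g 0 l)). exists l; auto.
Qed.

Definition has_dirderiv (f : Fn) (y v : nat -> R) (a : CL) : Prop := forall k,
  derivable_pt_lim (fun t => fst (f (line y v t) k)) 0 (fst (a k)) /\
  derivable_pt_lim (fun t => snd (f (line y v t) k)) 0 (snd (a k)).

Lemma has_dirderiv_eq f y v a : has_dirderiv f y v a -> dirderiv v f y = a.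
Proof.
  intros H. apply functional_extensionality; intro k. unfold dirderiv, deriv0C.
  destruct (H k). apply Cc_eq; simpl; apply deriv0_eq; auto.
Qed.

Lemma has_dirderiv_add f g y v a b : has_dirderiv f y v a -> has_dirderiv g y v b ->
  has_dirderiv (fun z => cladd (f z) (g z)) y v (cladd a b).
Proof.
  intros Hf Hg k. destruct (Hf k), (Hg k). unfold cladd, cadd; simpl.
  split; (eapply dpl_plus; [eauto|eauto|reflexivity]).
Qed.

Lemma has_dirderiv_scal f y v a r : has_dirderiv f y v a ->
  has_dirderiv (fun z => clscal r (f z)) y v (clscal r a).
Proof.
  intros Hf k. destruct (Hf k). unfold clscal, cscal; simpl.
  split; (eapply dpl_scal; [eauto|reflexivity]).
Qed.

Lemma has_dirderiv_const c y v : has_dirderiv (fun _ => c) y v clzero.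
Proof. intros k. split; apply dpl_const. Qed.

Lemma has_dirderiv_emul d i f y v a : has_dirderiv f y v a ->
  has_dirderiv (fun z => emul d i (f z)) y v (emul d i a).
Proof.
  intros Hf k. unfold emul. destruct (k <? 2^d)%nat; [|split; apply dpl_const].
  destruct (Hf (Nat.lxor k (2^i))). unfold cscal; simpl.
  split; (eapply dpl_scal; [eauto|reflexivity]).
Qed.

Lemma has_dirderiv_coord j f y v a : has_dirderiv f y v a ->
  has_dirderiv (fun z => clscal (z j) (f z)) y v (cladd (clscal (v j) (f y)) (clscal (y j) a)).
Proof.
  intros Hf k. destruct (Hf k). unfold clscal, cladd, cscal, cadd; simpl.
  split; (eapply (dpl_mult (fun t => line y v t j)); [apply dpl_affine|eauto|];
          rewrite line0; unfold line; ring).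
Qed.

Lemma has_dirderiv_clsumn n (F : nat -> Fn) y v (A : nat -> CL) :
  (forall m, (m < n)%nat -> has_dirderiv (F m) y v (A m)) ->
  has_dirderiv (fun z => clsumn n (fun m => F m z)) y v (clsumn n A).
Proof.
  induction n; intros H; [exact (has_dirderiv_const clzero y v)|].
  apply (has_dirderiv_add (fun z => clsumn n (fun m => F m z)) (F n)); [apply IHn; auto|apply H; lia].
Qed.

Lemma has_dirderiv_vmul d f y v a : has_dirderiv f y v a ->
  has_dirderiv (fun z => vmul d z (f z)) y v (cladd (vmul d v (f y)) (vmul d y a)).
Proof.
  intros Hf. unfold vmul. rewrite <- clsumn_add.
  apply (has_dirderiv_clsumn d (fun m z => clscal (z m) (emul d m (f z)))).
  intros m Hm. apply has_dirderiv_coord, has_dirderiv_emul, Hf.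
Qed.

Lemma rsum_ext n f g : (forall i, (i < n)%nat -> f i = g i) -> rsum n f = rsum n g.
Proof. induction n; simpl; intros; auto. rewrite IHn, H; auto. Qed.

Lemma rsum_lin n c1 c2 f g :
  rsum n (fun i => c1 * f i + c2 * g i) = c1 * rsum n f + c2 * rsum n g.
Proof. induction n; simpl; [|rewrite IHn]; ring. Qed.

Lemma rsum_zero n : rsum n (fun _ => 0) = 0.
Proof. induction n; simpl; [|rewrite IHn]; ring. Qed.

Lemma rsum_delta n j v : (j < n)%nat -> rsum n (fun i => v i * unitv j i) = v j.
Proof.
  induction n; intros Hj; [lia|]. simpl. unfold unitv at 2.
  destruct (Nat.eqb_spec n j) as [->|Hne].
  - rewrite (rsum_ext _ _ (fun _ => 0)), rsum_zero; [ring|].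
    intros. unfold unitv. destruct (Nat.eqb_spec i j); [lia|ring].
  - rewrite IHn by lia. ring.
Qed.

Definition smooth_real (d : nat) (g : (nat -> R) -> R) : Prop :=
  exists G : (nat -> R) -> nat -> R,
    forall y v, derivable_pt_lim (fun t => g (line y v t)) 0 (rsum d (fun i => v i * G y i)).

Lemma smooth_real_const d c : smooth_real d (fun _ => c).
Proof.
  exists (fun _ _ => 0). intros.
  rewrite (rsum_ext _ _ (fun _ => 0)), rsum_zero by (intros; ring). apply dpl_const.
Qed.

Lemma smooth_real_mult d f g : smooth_real d f -> smooth_real d g ->
  smooth_real d (fun z => f z * g z).
Proof.
  intros [F HF] [G HG]. exists (fun y i => F y i * g y + f y * G y i). intros y v.
  eapply dpl_mult; [apply HF|apply HG|]. rewrite line0.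
  rewrite (rsum_ext _ _ (fun i => g y * (v i * F y i) + f y * (v i * G y i))), rsum_lin
    by (intros; ring).
  ring.
Qed.

Lemma smooth_real_pow d i a : (i < d)%nat -> smooth_real d (fun z => z i ^ a).
Proof.
  intros Hi. induction a; [exact (smooth_real_const d 1)|].
  apply (smooth_real_mult d (fun z => z i) (fun z => z i ^ a)); auto.
  exists (fun _ l => unitv i l). intros. rewrite rsum_delta by auto. apply dpl_affine.
Qed.

Lemma smooth_real_monomial d (a : nat -> nat) l : (forall i, In i l -> (i < d)%nat) ->
  smooth_real d (fun z => fold_right Rmult 1 (map (fun i => z i ^ a i) l)).
Proof.
  induction l; simpl; intros Hl; [exact (smooth_real_const d 1)|].
  apply (smooth_real_mult d (fun z => z a0 ^ a a0)
           (fun z => fold_right Rmult 1 (map (fun i => z i ^ a i) l))); [apply smooth_real_pow|apply IHl]; auto.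
Qed.

(* A weak form of C^1, enough for [dirderiv] (defined by choice) to be linear in the function and in the direction. *)
Definition smooth (d : nat) (f : Fn) : Prop :=
  (forall z, clifford d (f z)) /\
  exists Df : (nat -> R) -> nat -> CL,
    forall y v, has_dirderiv f y v (clsumn d (fun i => clscal (v i) (Df y i))).

Lemma smooth_add d f g : smooth d f -> smooth d g -> smooth d (fun z => cladd (f z) (g z)).
Proof.
  intros [Bf [F HF]] [Bg [G HG]]. split.
  - intros z k Hk. unfold cladd. rewrite Bf, Bg by auto. unfold cadd, c0; cc_ring.
  - exists (fun y i => cladd (F y i) (G y i)). intros.
    replace (clsumn d _) with (cladd (clsumn d (fun i => clscal (v i) (F y i)))
                                     (clsumn d (fun i => clscal (v i) (G y i)))).
    + apply has_dirderiv_add; auto.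
    + rewrite <- clsumn_add. apply clsumn_ext; intros. clring.
Qed.

Lemma smooth_scal d r f : smooth d f -> smooth d (fun z => clscal r (f z)).
Proof.
  intros [Bf [F HF]]. split.
  - intros z k Hk. unfold clscal. rewrite Bf by auto. unfold cscal, c0; cc_ring.
  - exists (fun y i => clscal r (F y i)). intros.
    replace (clsumn d _) with (clscal r (clsumn d (fun i => clscal (v i) (F y i)))).
    + apply has_dirderiv_scal; auto.
    + rewrite <- clsumn_scal. apply clsumn_ext; intros. clring.
Qed.

Lemma smooth_zero d : smooth d (fun _ => clzero).
Proof.
  split; [intros z k _; reflexivity|].
  exists (fun _ _ => clzero). intros.
  rewrite (clsumn_ext _ _ (fun _ => clzero)), clsumn_zero by (intros; clring).
  apply has_dirderiv_const.
Qed.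

Lemma smooth_emul d i f : smooth d f -> smooth d (fun z => emul d i (f z)).
Proof.
  intros [Bf [F HF]]. split; [intros; apply emul_clifford|].
  exists (fun y m => emul d i (F y m)). intros.
  replace (clsumn d _) with (emul d i (clsumn d (fun m => clscal (v m) (F y m)))).
  + apply has_dirderiv_emul; auto.
  + rewrite emul_clsumn. apply clsumn_ext; intros. apply emul_scal.
Qed.

Lemma smooth_coord d j f : (j < d)%nat -> smooth d f -> smooth d (fun z => clscal (z j) (f z)).
Proof.
  intros Hj [Bf [F HF]]. split.
  - intros z k Hk. unfold clscal. rewrite Bf by auto. unfold cscal, c0; cc_ring.
  - exists (fun y i => cladd (clscal (unitv j i) (f y)) (clscal (y j) (F y i))). intros.
    replace (clsumn d _) with
      (cladd (clscal (v j) (f y)) (clscal (y j) (clsumn d (fun i => clscal (v i) (F y i))))).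
    + apply has_dirderiv_coord; auto.
    + rewrite <- (clsumn_delta d j (fun i => clscal (v i) (f y))), <- clsumn_scal, <- clsumn_add
        by auto.
      apply clsumn_ext; intros. clring.
Qed.

Lemma smooth_clsumn d n (F : nat -> Fn) : (forall m, (m < n)%nat -> smooth d (F m)) ->
  smooth d (fun z => clsumn n (fun m => F m z)).
Proof.
  induction n; intros H; [apply smooth_zero|].
  apply (smooth_add d (fun z => clsumn n (fun m => F m z)) (F n)); [apply IHn; auto|apply H; lia].
Qed.

Lemma smooth_vmul d f : smooth d f -> smooth d (fun z => vmul d z (f z)).
Proof.
  intros. apply (smooth_clsumn d d (fun m z => clscal (z m) (emul d m (f z)))).
  intros. apply smooth_coord, smooth_emul; auto.
Qed.

Lemma smooth_scal_real d g c : smooth_real d g -> clifford d c -> smooth d (fun z => clscal (g z) c).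
Proof.
  intros [G HG] Bc. split.
  - intros z k Hk. unfold clscal. rewrite Bc by auto. unfold cscal, c0; cc_ring.
  - exists (fun y i => clscal (G y i) c). intros y v.
    replace (clsumn d _) with (clscal (rsum d (fun i => v i * G y i)) c).
    + intros k. unfold clscal, cscal; simpl.
      split; (eapply (dpl_mult (fun t => g (line y v t))); [apply HG|apply dpl_const|ring]).
    + rewrite <- clsumn_scal_sum. apply clsumn_ext; intros; clring.
Qed.

Lemma dirderiv_has d f y v : smooth d f -> has_dirderiv f y v (dirderiv v f y).
Proof. intros [_ [F HF]]. rewrite (has_dirderiv_eq _ _ _ _ (HF y v)). auto. Qed.

Lemma dirderiv_linear d f y v : smooth d f ->
  dirderiv v f y = clsumn d (fun i => clscal (v i) (dirderiv (unitv i) f y)).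
Proof.
  intros [_ [F HF]]. rewrite (has_dirderiv_eq _ _ _ _ (HF y v)). apply clsumn_ext; intros.
  rewrite (has_dirderiv_eq _ _ _ _ (HF y (unitv i))), clsumn_delta; auto.
Qed.

Lemma dirderiv_clifford d f y v : smooth d f -> clifford d (dirderiv v f y).
Proof.
  intros Hf k Hk. destruct (dirderiv_has d f y v Hf k) as [H1 H2].
  assert (Z : forall t, f (line y v t) k = c0) by (intros; apply Hf; auto).
  apply Cc_eq; simpl; eapply uniqueness_limite; eauto;
    (eapply dpl_ext; [intros; rewrite Z; reflexivity|apply dpl_const]).
Qed.

Lemma dirderiv_add d f g y v : smooth d f -> smooth d g ->
  dirderiv v (fun z => cladd (f z) (g z)) y = cladd (dirderiv v f y) (dirderiv v g y).
Proof. intros. apply has_dirderiv_eq, has_dirderiv_add; apply (dirderiv_has d); auto. Qed.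

Lemma dirderiv_scal d r f y v : smooth d f ->
  dirderiv v (fun z => clscal r (f z)) y = clscal r (dirderiv v f y).
Proof. intros. apply has_dirderiv_eq, has_dirderiv_scal, (dirderiv_has d); auto. Qed.

Definition homogeneous (N : nat) (f : Fn) : Prop :=
  forall c z, f (fun j => c * z j) = clscal (c ^ N) (f z).

Lemma euler_identity d N f y : smooth d f -> homogeneous N f ->
  clsumn d (fun i => clscal (y i) (dirderiv (unitv i) f y)) = clscal (INR N) (f y).
Proof.
  intros Hf Hh. rewrite <- dirderiv_linear by auto. apply has_dirderiv_eq. intros k.
  assert (E : forall t, f (line y y t) = clscal ((1 + t) ^ N) (f y)).
  { intros. rewrite <- Hh. f_equal. apply functional_extensionality; intros; unfold line; ring. }
  unfold clscal, cscal; simpl.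
  split; (eapply dpl_ext; [intros; rewrite E; reflexivity|];
          eapply (dpl_mult (fun t => (1 + t) ^ N)); [apply dpl_pow_1plus|apply dpl_const|ring]).
Qed.

(** * Dunkl operators *)

Lemma refl_fixed d a y : ip d a y = 0 -> refl d a y = y.
Proof. intros H. apply functional_extensionality; intro j. unfold refl. rewrite H. unfold Rdiv. ring. Qed.

Lemma rsum_scal n c f : rsum n (fun i => c * f i) = c * rsum n f.
Proof. induction n; simpl; [|rewrite IHn]; ring. Qed.

Section Dunkl.

Variables (d : nat) (Rp : list (nat -> R)) (kappa : (nat -> R) -> R).

Hypothesis roots_nonzero : forall a, In a Rp -> ip d a a <> 0.

Notation Dh := (Dh d Rp kappa).
Notation T := (dunklT d Rp kappa).

Lemma Dh_emul f y : Dh f y = clsumn d (fun i => emul d i (T i f y)).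
Proof. apply clsumn_ext; intros. apply clmul_egen; auto. Qed.

Lemma dunklT_clsuml i f y :
  T i f y = cladd (dirderiv (unitv i) f y) (clsuml Rp (fun a => clscal (kappa a * a i) (divdiff d a f y))).
Proof. reflexivity. Qed.

Lemma divdiff_add a f g y : smooth d f -> smooth d g ->
  divdiff d a (fun z => cladd (f z) (g z)) y = cladd (divdiff d a f y) (divdiff d a g y).
Proof.
  intros. unfold divdiff. destruct (Req_EM_T _ _); [rewrite (dirderiv_add d) by auto|]; clring.
Qed.

Lemma divdiff_scal r a f y : smooth d f ->
  divdiff d a (fun z => clscal r (f z)) y = clscal r (divdiff d a f y).
Proof.
  intros. unfold divdiff. destruct (Req_EM_T _ _); [rewrite (dirderiv_scal d) by auto|]; clring.
Qed.

Lemma Dh_add f g y : smooth d f -> smooth d g ->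
  Dh (fun z => cladd (f z) (g z)) y = cladd (Dh f y) (Dh g y).
Proof.
  intros. rewrite !Dh_emul, <- clsumn_add. apply clsumn_ext; intros. rewrite <- emul_add. f_equal.
  rewrite !dunklT_clsuml, (dirderiv_add d) by auto.
  rewrite (clsuml_ext _ _ (fun a => cladd (clscal (kappa a * a i) (divdiff d a f y))
                                          (clscal (kappa a * a i) (divdiff d a g y)))).
  - rewrite clsuml_add. clring.
  - intros. rewrite divdiff_add by auto. clring.
Qed.

Lemma Dh_scal r f y : smooth d f -> Dh (fun z => clscal r (f z)) y = clscal r (Dh f y).
Proof.
  intros. rewrite !Dh_emul, <- clsumn_scal. apply clsumn_ext; intros. rewrite <- emul_scal. f_equal.
  rewrite !dunklT_clsuml, (dirderiv_scal d) by auto.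
  rewrite (clsuml_ext _ _ (fun a => clscal r (clscal (kappa a * a i) (divdiff d a f y)))).
  - rewrite clsuml_scal. clring.
  - intros. rewrite divdiff_scal by auto. clring.
Qed.

Lemma clsuml_clifford {A} (l : list A) F : (forall a, clifford d (F a)) -> clifford d (clsuml l F).
Proof.
  intros HF k Hk. induction l; [reflexivity|]. unfold clsuml in *; cbn [fold_right].
  change (cadd (F a k) (clsuml l F k) = c0). unfold clsuml. rewrite IHl, HF by auto. unfold cadd, c0; cc_ring.
Qed.

Lemma divdiff_clifford a f y : smooth d f -> clifford d (divdiff d a f y).
Proof.
  intros Hf k Hk. unfold divdiff, clsub, cladd, clscal. destruct (Req_EM_T _ _).
  - rewrite (dirderiv_clifford d) by auto. unfold cscal, c0; cc_ring.
  - destruct Hf as [Bf _]. rewrite !Bf by auto. unfold cscal, cadd, c0; cc_ring.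
Qed.

Lemma Dh_zero y : Dh (fun _ => clzero) y = clzero.
Proof.
  transitivity (Dh (fun _ => clscal 0 clzero) y); [f_equal; apply functional_extensionality; intros; clring|].
  rewrite (Dh_scal 0 (fun _ => clzero)) by apply smooth_zero. clring.
Qed.

Lemma Dplus_scal r f y : smooth d f ->
  Dplus d Rp kappa (fun z => clscal r (f z)) y = clscal r (Dplus d Rp kappa f y).
Proof. intros. unfold Dplus. rewrite Dh_scal, !clmul_vecCL, vmul_scal by auto. clring. Qed.

Lemma dunklT_clifford i f y : smooth d f -> clifford d (T i f y).
Proof.
  intros Hf k Hk. rewrite dunklT_clsuml. unfold cladd at 1.
  assert (Hs : clifford d (clsuml Rp (fun a => clscal (kappa a * a i) (divdiff d a f y)))).
  { apply clsuml_clifford. intros a k' Hk'. unfold clscal.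
    rewrite divdiff_clifford by auto. unfold cscal, c0; cc_ring. }
  rewrite (dirderiv_clifford d), Hs by auto. unfold cadd, c0; cc_ring.
Qed.

Lemma divdiff_vmul a f y : In a Rp -> smooth d f ->
  divdiff d a (fun z => vmul d z (f z)) y =
  cladd (vmul d y (divdiff d a f y)) (clscal (2 / ip d a a) (vmul d a (f (refl d a y)))).
Proof.
  intros Ha Hf. unfold divdiff. destruct (Req_EM_T (ip d a y) 0) as [E|E].
  - rewrite (has_dirderiv_eq _ _ _ _ (has_dirderiv_vmul d f y a _ (dirderiv_has d f y a Hf))).
    rewrite (refl_fixed d a y E), vmul_scal. clring.
  - assert (Rf : refl d a y = fun j => 1 * y j + (- (2 * ip d a y / ip d a a)) * a j).
    { apply functional_extensionality; intro j; unfold refl; ring. }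
    rewrite Rf at 1. rewrite vmul_lin. unfold clsub. rewrite vmul_scal, vmul_add, vmul_scal.
    replace (2 / ip d a a) with (/ ip d a y * (2 * ip d a y / ip d a a)) by (field; auto).
    clring.
Qed.

Lemma sum_coord_dunklT N f y : smooth d f -> homogeneous N f ->
  clsumn d (fun i => clscal (y i) (T i f y)) =
  cladd (clscal (INR N + gamma Rp kappa) (f y)) (clscal (-1) (clsuml Rp (fun a => clscal (kappa a) (f (refl d a y))))).
Proof.
  intros Hf Hh.
  rewrite (clsumn_ext d _ (fun i => cladd (clscal (y i) (dirderiv (unitv i) f y))
             (clsuml Rp (fun a => clscal (y i * (kappa a * a i)) (divdiff d a f y))))).
  2:{ intros i Hi. rewrite dunklT_clsuml.
      transitivity (cladd (clscal (y i) (dirderiv (unitv i) f y))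
        (clscal (y i) (clsuml Rp (fun a => clscal (kappa a * a i) (divdiff d a f y))))); [clring|].
      rewrite <- clsuml_scal. f_equal. apply clsuml_ext; intros; clring. }
  rewrite clsumn_add, (euler_identity d N f y), clsumn_clsuml by auto.
  rewrite (clsuml_ext Rp _ (fun a => cladd (clscal (kappa a) (f y)) (clscal (-1) (clscal (kappa a) (f (refl d a y)))))).
  - rewrite clsuml_add, clsuml_scal_sum, clsuml_scal. unfold gamma. clring.
  - intros a Ha.
    transitivity (clscal (kappa a * ip d a y) (divdiff d a f y)).
    { rewrite clsumn_scal_sum. f_equal. unfold ip. rewrite <- rsum_scal. apply rsum_ext; intros; ring. }
    unfold divdiff. destruct (Req_EM_T (ip d a y) 0) as [E|E].
    + rewrite E, refl_fixed by auto. clring.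
    + transitivity (clscal (kappa a * ip d a y * / ip d a y) (clsub (f y) (f (refl d a y)))); [clring|].
      replace (kappa a * ip d a y * / ip d a y) with (kappa a) by (field; auto). clring.
Qed.

(* [D_h x + x D_h = -(2N + mu)] on functions homogeneous of degree [N]: the terms [e_i e_i f]
   give [-d f]; anticommuting [e_i] past [x] gives [-2 sum_i y_i T_i f = -2 (N + gamma) f + ...],
   whose reflection part cancels the reflection terms of [T_i (x f)]. *)
Lemma Dh_vmul N f y : smooth d f -> homogeneous N f ->
  Dh (fun z => vmul d z (f z)) y =
  cladd (clscal (-1) (vmul d y (Dh f y))) (clscal (-(2 * INR N + mu d Rp kappa)) (f y)).
Proof.
  intros Hf Hh.
  set (r := fun a i => clscal (kappa a * a i * (2 / ip d a a)) (vmul d a (f (refl d a y)))).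
  assert (HT : forall i, (i < d)%nat -> T i (fun z => vmul d z (f z)) y =
     cladd (cladd (emul d i (f y)) (vmul d y (T i f y))) (clsuml Rp (fun a => r a i))).
  { intros i Hi. rewrite !dunklT_clsuml.
    rewrite (has_dirderiv_eq _ _ _ _ (has_dirderiv_vmul d f y _ _ (dirderiv_has d f y _ Hf))).
    rewrite vmul_unitv by auto.
    rewrite (clsuml_ext _ _ (fun a => cladd (vmul d y (clscal (kappa a * a i) (divdiff d a f y))) (r a i))).
    - rewrite clsuml_add, <- vmul_clsuml, vmul_add. clring.
    - intros a Ha. unfold r. rewrite divdiff_vmul, vmul_scal by auto. clring. }
  assert (Hrefl : clsumn d (fun i => emul d i (clsuml Rp (fun a => r a i))) =
                  clscal (-2) (clsuml Rp (fun a => clscal (kappa a) (f (refl d a y))))).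
  { rewrite <- clsuml_scal, (clsumn_ext _ _ (fun i => clsuml Rp (fun a => emul d i (r a i))))
      by (intros; apply emul_clsuml).
    rewrite clsumn_clsuml. apply clsuml_ext; intros a Ha. unfold r.
    transitivity (clscal (kappa a * (2 / ip d a a)) (vmul d a (vmul d a (f (refl d a y))))).
    - unfold vmul at 2. rewrite <- clsumn_scal. apply clsumn_ext; intros. rewrite emul_scal. clring.
    - rewrite vmul_sq by apply Hf.
      transitivity (clscal (kappa a * (2 / ip d a a) * - ip d a a) (f (refl d a y))); [clring|].
      replace (kappa a * (2 / ip d a a) * - ip d a a) with (-2 * kappa a) by (field; auto). clring. }
  rewrite Dh_emul, (clsumn_ext _ _ (fun i => cladd (cladd (emul d i (emul d i (f y)))
      (emul d i (vmul d y (T i f y)))) (emul d i (clsuml Rp (fun a => r a i))))).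
  2:{ intros. rewrite HT, !emul_add; auto. }
  rewrite !clsumn_add, Hrefl.
  rewrite (clsumn_ext d _ (fun _ => clscal (-1) (f y))), clsumn_const by (intros; apply emul_sq, Hf; auto).
  rewrite sum_emul_vmul, <- Dh_emul, (sum_coord_dunklT N) by (auto; intros; apply dunklT_clifford; auto).
  unfold mu. clring.
Qed.

End Dunkl.

(** * Homogeneous polynomials and the Hermite recursion *)

Definition polyF (d : nat) (L : list ((nat -> nat) * CL)) : Fn := fun x =>
  fold_right (fun mc acc =>
    cladd (clscal (fold_right Rmult 1 (map (fun i => x i ^ fst mc i) (seq 0 d))) (snd mc)) acc)
  clzero L.

Lemma smooth_polyF d L : (forall mc, In mc L -> clifford d (snd mc)) -> smooth d (polyF d L).
Proof.
  induction L as [|mc L IH]; intros H; [apply smooth_zero|].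
  apply (smooth_add d (fun x => clscal (fold_right Rmult 1 (map (fun i => x i ^ fst mc i) (seq 0 d))) (snd mc))
                      (polyF d L)).
  - apply smooth_scal_real; [|apply H; left; auto].
    apply smooth_real_monomial. intros i Hi. apply in_seq in Hi. lia.
  - apply IH. intros; apply H; right; auto.
Qed.

Lemma monomial_scale l c (x : nat -> R) a :
  fold_right Rmult 1 (map (fun i => (c * x i) ^ a i) l) =
  c ^ (fold_right (fun i acc => (a i + acc)%nat) 0%nat l) * fold_right Rmult 1 (map (fun i => x i ^ a i) l).
Proof. induction l; simpl; [ring|]. rewrite IHl, Rpow_mult_distr, pow_add. ring. Qed.

Lemma fold_seq_nsum d a : fold_right (fun i acc => (a i + acc)%nat) 0%nat (seq 0 d) = nsum d a.
Proof.
  assert (Shift : forall l z, fold_right (fun i acc => (a i + acc)%nat) z l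
                  = (fold_right (fun i acc => (a i + acc)%nat) 0%nat l + z)%nat).
  { induction l; simpl; intros; auto. rewrite IHl. lia. }
  induction d; [reflexivity|].
  rewrite seq_S, fold_right_app. cbn [fold_right]. rewrite Shift, IHd. simpl. lia.
Qed.

Lemma homogeneous_polyF d n L : (forall mc, In mc L -> nsum d (fst mc) = n) -> homogeneous n (polyF d L).
Proof.
  intros H c z. unfold polyF. induction L; simpl; [clring|].
  rewrite IHL by (intros; apply H; right; auto).
  rewrite monomial_scale, fold_seq_nsum, H by (left; auto). clring.
Qed.

Lemma ip_self_pos d a i : (i < d)%nat -> a i <> 0 -> 0 < ip d a a.
Proof.
  intros Hi Ha. unfold ip.
  assert (Pos : forall m, 0 <= rsum m (fun j => a j * a j)).
  { induction m; simpl; [lra|]. pose proof (Rle_0_sqr (a m)). unfold Rsqr in *. lra. }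
  induction d; [lia|]. simpl. destruct (Nat.eq_dec i d) as [->|Hne].
  - pose proof (Pos d). pose proof (Rsqr_pos_lt _ Ha). unfold Rsqr in *. lra.
  - pose proof (IHd ltac:(lia)). pose proof (Rle_0_sqr (a d)). unfold Rsqr in *. lra.
Qed.

Lemma positive_roots_nonzero d Rl Rp : is_root_system d Rl -> is_positive_subsystem d Rl Rp ->
  forall a, In a Rp -> ip d a a <> 0.
Proof.
  intros [_ [HR _]] [_ [beta [_ Hb]]] a Ha. apply Hb in Ha as [Ha _].
  destruct (HR a Ha) as [_ [i [Hi Hai]]]. pose proof (ip_self_pos d a i Hi Hai). lra.
Qed.

(* The constant by which [x D_h - D_h x] acts on [x^m P] for [Nat.even m = even]. *)
Definition comm_const (lam : R) (even : bool) : R := if even then lam else 2 - lam.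

Lemma Cconst_S s m n :
  Cconst (S s) m n = Cconst s m n + 2 * comm_const (m + 2 * INR n) (Nat.even s).
Proof.
  unfold Cconst, comm_const. rewrite Nat.even_succ, <- Nat.negb_even, S_INR.
  destruct (Nat.even s); simpl; ring.
Qed.

Section Hermite.

Variables (d : nat) (Rp : list (nat -> R)) (kappa : (nat -> R) -> R) (n : nat) (P : Fn).

Hypothesis roots_nonzero : forall a, In a Rp -> ip d a a <> 0.
Hypothesis P_smooth : smooth d P.
Hypothesis P_homogeneous : homogeneous n P.
Hypothesis P_monogenic : forall x, Dh d Rp kappa P x = clzero.

Notation Dh := (Dh d Rp kappa).
Notation Dplus := (Dplus d Rp kappa).
Notation lam := (mu d Rp kappa + 2 * INR n).

Fixpoint xpow (m : nat) : Fn :=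
  match m with O => P | S m' => fun y => vmul d y (xpow m' y) end.

Lemma smooth_xpow m : smooth d (xpow m).
Proof. induction m; simpl; auto using smooth_vmul. Qed.

Lemma homogeneous_xpow m : homogeneous (m + n) (xpow m).
Proof.
  induction m; simpl; auto. intros c z. rewrite IHm, vmul_scal, vmul_scal_vec. clring.
Qed.

Definition Dh_xpow_coef (m : nat) : R := if Nat.even m then - (INR m + lam) else - (INR m + 1).

Lemma Dh_xpow_S m y : Dh (xpow (S m)) y = clscal (Dh_xpow_coef m) (xpow m y).
Proof.
  induction m.
  - simpl xpow. rewrite (Dh_vmul d Rp kappa roots_nonzero n), P_monogenic, vmul_zero by auto.
    unfold Dh_xpow_coef. simpl. clring.
  - change (xpow (S (S m))) with (fun y => vmul d y (xpow (S m) y)).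
    rewrite (Dh_vmul d Rp kappa roots_nonzero (S m + n)), IHm, vmul_scal
      by auto using smooth_xpow, homogeneous_xpow.
    unfold Dh_xpow_coef. rewrite Nat.even_succ, <- Nat.negb_even, plus_INR, S_INR.
    destruct (Nat.even m); simpl; clring.
Qed.

Inductive span : bool -> Fn -> Prop :=
  | span_xpow m : span (Nat.even m) (xpow m)
  | span_zero p : span p (fun _ => clzero)
  | span_add p f g : span p f -> span p g -> span p (fun z => cladd (f z) (g z))
  | span_scal p r f : span p f -> span p (fun z => clscal r (f z)).

Lemma smooth_span p f : span p f -> smooth d f.
Proof. induction 1; auto using smooth_xpow, smooth_zero, smooth_add, smooth_scal. Qed.

Lemma span_Dh p f : span p f -> span (negb p) (Dh f).
Proof.
  induction 1.
  - destruct m.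
    + replace (Dh (xpow 0)) with (fun _ : nat -> R => clzero)
        by (apply functional_extensionality; intros; symmetry; apply P_monogenic).
      apply span_zero.
    + replace (Dh (xpow (S m))) with (fun y => clscal (Dh_xpow_coef m) (xpow m y))
        by (apply functional_extensionality; intros; symmetry; apply Dh_xpow_S).
      rewrite Nat.even_succ, <- Nat.negb_even, negb_involutive. apply span_scal, span_xpow.
  - replace (Dh (fun _ => clzero)) with (fun _ : nat -> R => clzero)
      by (apply functional_extensionality; intros; symmetry; apply Dh_zero).
    apply span_zero.
  - replace (Dh (fun z => cladd (f z) (g z))) with (fun y => cladd (Dh f y) (Dh g y))
      by (apply functional_extensionality; intros; symmetry; apply Dh_add; eapply smooth_span; eauto).
    apply span_add; auto.
  - replace (Dh (fun z => clscal r (f z))) with (fun y => clscal r (Dh f y))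
      by (apply functional_extensionality; intros; symmetry; apply Dh_scal; eapply smooth_span; eauto).
    apply span_scal; auto.
Qed.

Lemma span_vmul p f : span p f -> span (negb p) (fun y => vmul d y (f y)).
Proof.
  induction 1.
  - replace (negb (Nat.even m)) with (Nat.even (S m)) by (rewrite Nat.even_succ, Nat.negb_even; reflexivity).
    apply (span_xpow (S m)).
  - replace (fun y => vmul d y clzero) with (fun _ : nat -> R => clzero)
      by (apply functional_extensionality; intros; symmetry; apply vmul_zero).
    apply span_zero.
  - replace (fun y => vmul d y (cladd (f y) (g y))) with (fun y => cladd (vmul d y (f y)) (vmul d y (g y)))
      by (apply functional_extensionality; intros; symmetry; apply vmul_add).
    apply span_add; auto.
  - replace (fun y => vmul d y (clscal r (f y))) with (fun y => clscal r (vmul d y (f y)))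
      by (apply functional_extensionality; intros; symmetry; apply vmul_scal).
    apply span_scal; auto.
Qed.

Lemma vmul_Dh_span p f y : span p f ->
  vmul d y (Dh f y) = cladd (Dh (fun z => vmul d z (f z)) y) (clscal (comm_const lam p) (f y)).
Proof.
  induction 1.
  - destruct m as [|m].
    + change (fun z => vmul d z (xpow 0 z)) with (xpow 1).
      rewrite P_monogenic, vmul_zero, Dh_xpow_S. unfold Dh_xpow_coef, comm_const. simpl. clring.
    + change (fun z => vmul d z (xpow (S m) z)) with (xpow (S (S m))).
      rewrite !Dh_xpow_S, vmul_scal. change (vmul d y (xpow m y)) with (xpow (S m) y).
      unfold Dh_xpow_coef, comm_const. rewrite Nat.even_succ, <- Nat.negb_even, S_INR.
      destruct (Nat.even m); simpl; clring.
  - replace (fun z => vmul d z clzero) with (fun _ : nat -> R => clzero)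
      by (apply functional_extensionality; intros; symmetry; apply vmul_zero).
    rewrite Dh_zero, vmul_zero. clring.
  - pose proof (smooth_span _ _ H). pose proof (smooth_span _ _ H0).
    replace (fun z => vmul d z (cladd (f z) (g z))) with (fun z => cladd (vmul d z (f z)) (vmul d z (g z)))
      by (apply functional_extensionality; intros; symmetry; apply vmul_add).
    rewrite !Dh_add, vmul_add, IHspan1, IHspan2 by auto using smooth_vmul. clring.
  - pose proof (smooth_span _ _ H).
    replace (fun z => vmul d z (clscal r (f z))) with (fun z => clscal r (vmul d z (f z)))
      by (apply functional_extensionality; intros; symmetry; apply vmul_scal).
    rewrite !Dh_scal, vmul_scal, IHspan by auto using smooth_vmul. clring.
Qed.

Lemma Dplus_expand f : Dplus f = fun z => cladd (Dh f z) (clscal (-2) (vmul d z (f z))).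
Proof. apply functional_extensionality; intro z. unfold Dplus. rewrite clmul_vecCL. clring. Qed.

Lemma span_Dplus p f : span p f -> span (negb p) (Dplus f).
Proof.
  intros Hf. rewrite Dplus_expand.
  apply span_add; [|apply span_scal]; auto using span_Dh, span_vmul.
Qed.

Lemma Dh_Dplus p f y : span p f ->
  Dh (Dplus f) y = cladd (Dplus (Dh f) y) (clscal (2 * comm_const lam p) (f y)).
Proof.
  intros Hf. pose proof (smooth_span _ _ Hf).
  rewrite Dplus_expand, Dh_add, Dh_scal, (Dplus_expand (Dh f)), (vmul_Dh_span p)
    by eauto using smooth_span, span_Dh, span_vmul, smooth_scal.
  clring.
Qed.

Lemma span_Hfun s : span (Nat.even s) (Hfun d Rp kappa s P).
Proof.
  induction s; [apply (span_xpow 0)|].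
  replace (Nat.even (S s)) with (negb (Nat.even s)) by (rewrite Nat.even_succ, Nat.negb_even; reflexivity).
  apply span_Dplus, IHs.
Qed.

Lemma Dplus_Dh_Hfun s y :
  Dplus (Dh (Hfun d Rp kappa s P)) y = clscal (Cconst s (mu d Rp kappa) n) (Hfun d Rp kappa s P y).
Proof.
  revert y. induction s; intros y.
  - replace (Dh (Hfun d Rp kappa 0 P)) with (fun _ : nat -> R => clzero)
      by (apply functional_extensionality; intros; symmetry; apply P_monogenic).
    rewrite Dplus_expand, Dh_zero, vmul_zero. unfold Cconst. simpl. clring.
  - change (Hfun d Rp kappa (S s) P) with (Dplus (Hfun d Rp kappa s P)).
    replace (Dh (Dplus (Hfun d Rp kappa s P))) with (fun z =>
        clscal (Cconst (S s) (mu d Rp kappa) n) (Hfun d Rp kappa s P z)).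
    + apply Dplus_scal; auto. eapply smooth_span, span_Hfun.
    + apply functional_extensionality; intro z.
      rewrite (Dh_Dplus (Nat.even s)), IHs, Cconst_S by apply span_Hfun. clring.
Qed.

End Hermite.

Theorem theorem3p2 (d : nat) (hd : (2 <= d)%nat)
  (Rl Rp : list (nat -> R)) (hR : is_root_system d Rl)
  (hRp : is_positive_subsystem d Rl Rp)
  (kappa : (nat -> R) -> R) (hk : is_multiplicity d Rl kappa)
  (hg : 0 < gamma Rp kappa)
  (n s : nat) (P : Fn) (hP : in_Mn d Rp kappa n P) :
  forall x : nat -> R,
    let H := Hfun d Rp kappa s P in
    clsub (clsub (Dh d Rp kappa (Dh d Rp kappa H) x)
                 (clscal 2 (clmul d (vecCL d x) (Dh d Rp kappa H x))))
          (clscal (Cconst s (mu d Rp kappa) n) (H x))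
    = clzero.
Proof.
  intros x H.
  destruct hP as [[L [HL HPL]] HDP].
  assert (EP : P = polyF d L) by (apply functional_extensionality; apply HPL).
  change (clsub (Dplus d Rp kappa (Dh d Rp kappa H) x) (clscal (Cconst s (mu d Rp kappa) n) (H x)) = clzero).
  unfold H. rewrite (Dplus_Dh_Hfun d Rp kappa n P).
  - clring.
  - apply (positive_roots_nonzero d Rl Rp hR hRp).
  - rewrite EP. apply smooth_polyF. intros mc Hmc. exact (proj2 (HL mc Hmc)).
  - rewrite EP. apply homogeneous_polyF. intros mc Hmc. exact (proj1 (HL mc Hmc)).
  - exact HDP.
Qed.
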